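(* Let $(P,Q)=(p_1,\dots,p_N,q_1,\dots,q_N)$ be a global solution of the Cucker–Smale model with velocity control described in the context. Then: (1) The following three statements are equivalent: (a) $(P,Q)$ exhibits flocking, i.e. $\sup_{t\ge0}D_Q(t)<\infty$ and $\lim_{t\to\infty}D_P(t)=0$; (b) $D_P$ decays exponentially, i.e. there exist constants $B,C>0$ with $D_P(t)\le Be^{-Ct}$ for all $t\ge0$; (c) the agents are spatially bounded, i.e. $\sup_{t\ge0}D_Q(t)<\infty$. (2) If \[ \|P^0\|<\frac{\mathcal M\kappa}{M_{G'}}\int_{\|Q^0\|}^{+\infty}\psi(s)\,ds, \] then $(P,Q)$ exhibits flocking. In particular, if $\|\psi\|_{L^1(\mathbb R_+)}=\infty$, then flocking occurs for every initial datum.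
   Context: Let $N\ge1$, $d\ge1$, $\kappa>0$, and write $[N]=\{1,\dots,N\}$, $\mathbb R_+=(0,\infty)$, $\mathbb R_{\ge0}=[0,\infty)$. The velocity control function $G:\mathbb R^d\to\mathbb R^d$ is $G(p)=g(|p|)\,p/|p|$ for $p\neq0$ and $G(0)=0$, where $g\in C^1(\mathbb R_{\ge0})$, $g(0)=0$, on every compact interval $g'$ satisfies $0<m\le g'\le M$ for some constants $m,M$ (depending on the interval), and $g$ is convex or concave on $\mathbb R_+$. The communication kernel $\psi:\mathbb R_+\to\mathbb R_+$ is bounded, Lipschitz continuous, and nonincreasing ($(\psi(r)-\psi(s))(r-s)\le0$ for all $r,s$). The model is the system of ODEs, for $i\in[N]$ and $t>0$, \[ \dot q_i=G(p_i),\qquad \dot p_i=\frac{\kappa}{N}\sum_{k=1}^N\psi(|q_k-q_i|)\big(G(p_k)-G(p_i)\big),\qquad (q_i,p_i)(0)=(q_i^0,p_i^0)\in\mathbb R^d\times\mathbb R^d. \] Notation: $P^0=(p_1^0,\dots,p_N^0)$, $Q^0=(q_1^0,\dots,q_N^0)$; $\|Q\|^2=\sum_{i,j\in[N]}|q_i-q_j|^2$, $\|P\|^2=\sum_{i,j\in[N]}|p_i-p_j|^2$; $D_Q(t)=\max_{i,j}|q_i(t)-q_j(t)|$, $D_P(t)=\max_{i,j}|p_i(t)-p_j(t)|$; $P^0_M=\max_i|p_i^0|$, $M_{G'}=\max\{g'(r):0\le r\le P^0_M\}$, $m_{G'}=\min\{g'(r):0\le r\le P^0_M\}$, and $\mathcal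 M=\min\{m_{G'},\,m_{G'}^2/M_{G'}\}$. *)

From Stdlib Require Import Reals Lra.
From Coquelicot Require Import Coquelicot.
Open Scope R_scope.

Fixpoint rsum (n : nat) (f : nat -> R) : R :=
  match n with O => 0 | S m => rsum m f + f m end.

(* rmax n f = max(0, f 0, ..., f (n-1)); used only on nonnegative quantities *)
Fixpoint rmax (n : nat) (f : nat -> R) : R :=
  match n with O => 0 | S m => Rmax (rmax m f) (f m) end.

(* A vector of R^d is represented by its coordinates k < d. *)
Definition vec := nat -> R.
Definition vnorm (d : nat) (x : vec) : R := sqrt (rsum d (fun k => x k ^ 2)).
Definition vsub (x y : vec) : vec := fun k => x k - y k.

Definition Gvel (g : R -> R) (d : nat) (p : vec) : vec :=
  fun k => if Req_EM_T (vnorm d p) 0 then 0 else g (vnorm d p) * p k / vnorm d p.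

(* g in C^1(R_{>=0}) with derivative g' (one-sided at 0, obtained by continuity),
   g(0) = 0, g' bounded between positive constants on each compact interval,
   g convex or concave on R_+ *)
Definition convex_pos (g : R -> R) : Prop :=
  forall x y t, 0 < x -> 0 < y -> 0 <= t <= 1 ->
    g (t * x + (1 - t) * y) <= t * g x + (1 - t) * g y.
Definition concave_pos (g : R -> R) : Prop :=
  forall x y t, 0 < x -> 0 < y -> 0 <= t <= 1 ->
    t * g x + (1 - t) * g y <= g (t * x + (1 - t) * y).

Definition velocity_control (g g' : R -> R) : Prop :=
  g 0 = 0 /\
  (forall r, 0 < r -> is_derive g r (g' r)) /\
  (forall r, 0 < r -> continuous g' r) /\
  filterlim g (at_right 0) (locally (g 0)) /\
  filterlim g' (at_right 0) (locally (g' 0)) /\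
  (forall b, 0 <= b -> exists m M, 0 < m /\
     forall r, 0 <= r <= b -> m <= g' r <= M) /\
  (convex_pos g \/ concave_pos g).

(* psi bounded, Lipschitz, nonincreasing, positive; stated on [0,oo)
   (psi(0) is the continuous extension) *)
Definition comm_kernel (psi : R -> R) : Prop :=
  (forall r, 0 <= r -> 0 < psi r) /\
  (exists B, forall r, 0 <= r -> psi r <= B) /\
  (exists L, forall r s, 0 <= r -> 0 <= s -> Rabs (psi r - psi s) <= L * Rabs (r - s)) /\
  (forall r s, 0 <= r -> 0 <= s -> (psi r - psi s) * (r - s) <= 0).

Definition CS_force (N d : nat) (kappa : R) (g psi : R -> R)
    (q p : nat -> R -> vec) (i : nat) (t : R) (k : nat) : R :=
  kappa / INR N *
    rsum N (fun j => psi (vnorm d (vsub (q j t) (q i t))) *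
                     (Gvel g d (p j t) k - Gvel g d (p i t) k)).

Definition CS_solution (N d : nat) (kappa : R) (g psi : R -> R)
    (q p : nat -> R -> vec) : Prop :=
  forall i k, (i < N)%nat -> (k < d)%nat ->
    (forall t, 0 < t -> is_derive (fun s => q i s k) t (Gvel g d (p i t) k)) /\
    (forall t, 0 < t -> is_derive (fun s => p i s k) t (CS_force N d kappa g psi q p i t k)) /\
    filterlim (fun s => q i s k) (at_right 0) (locally (q i 0 k)) /\
    filterlim (fun s => p i s k) (at_right 0) (locally (p i 0 k)).

Definition DQ (N d : nat) (q : nat -> R -> vec) (t : R) : R :=
  rmax N (fun i => rmax N (fun j => vnorm d (vsub (q i t) (q j t)))).

Definition config_norm (N d : nat) (x : nat -> vec) : R :=
  sqrt (rsum N (fun i => rsum N (fun j => vnorm d (vsub (x i) (x j)) ^ 2))).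

Definition spatially_bounded (N d : nat) (q : nat -> R -> vec) : Prop :=
  exists B, forall t, 0 <= t -> DQ N d q t <= B.

Definition flocking (N d : nat) (q p : nat -> R -> vec) : Prop :=
  spatially_bounded N d q /\ is_lim (DQ N d p) p_infty 0.

Definition exp_decay (N d : nat) (p : nat -> R -> vec) : Prop :=
  exists B C, 0 < B /\ 0 < C /\ forall t, 0 <= t -> DQ N d p t <= B * exp (- C * t).

Definition improper_int (f : R -> R) (a : R) : Rbar :=
  Lim (fun x => RInt f a x) p_infty.

Definition sup_on (f : R -> R) (a : R) : R :=
  real (Lub_Rbar (fun y => exists r, 0 <= r <= a /\ y = f r)).
Definition inf_on (f : R -> R) (a : R) : R :=
  real (Glb_Rbar (fun y => exists r, 0 <= r <= a /\ y = f r)).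

(* The speeds |p_i| obey a maximum principle, so along the flow g' stays in [m, M], its
   bounds on [0, P0M]; then G is strongly monotone with constant m and M-Lipschitz.  As the
   weights are symmetric, d/dt ||P||^2 = -2 kappa sum_ij psi(|q_i - q_j|) <p_i - p_j, G p_i - G p_j>
   <= -2 kappa m psi(||Q||) ||P||^2, while d/dt ||Q|| <= M ||P||.  Bounded positions thus give
   exponential decay of ||P||, and exponential decay of D_P makes the velocities integrable,
   which bounds the positions.  Finally ||P|| + (kappa m / M) Psi(||Q||), with Psi a primitive
   of psi, does not increase, so ||Q|| stays below every X with
   Psi(X) - Psi(||Q^0||) > M ||P^0|| / (kappa m); such an X exists under the smallness
   condition, and always when psi is not integrable. *)

From Stdlib Require Import Reals Lra Lia Psatz FunctionalExtensionality.
From Coquelicot Require Import Coquelicot.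
Open Scope R_scope.

Lemma rsum_ext n f h : (forall k, (k < n)%nat -> f k = h k) -> rsum n f = rsum n h.
Proof.
  induction n as [|n IH]; simpl; intros H; auto.
  rewrite IH by (intros; apply H; lia). rewrite H by lia. reflexivity.
Qed.

Lemma rsum_add n f h : rsum n (fun k => f k + h k) = rsum n f + rsum n h.
Proof. induction n; simpl; [lra|]. rewrite IHn; lra. Qed.

Lemma rsum_scal n c f : rsum n (fun k => c * f k) = c * rsum n f.
Proof. induction n; simpl; [lra|]. rewrite IHn; lra. Qed.

Lemma rsum_opp n f : rsum n (fun k => - f k) = - rsum n f.
Proof. induction n; simpl; [lra|]. rewrite IHn; lra. Qed.

Lemma rsum_sub n f h : rsum n (fun k => f k - h k) = rsum n f - rsum n h.
Proof. induction n; simpl; [lra|]. rewrite IHn; lra. Qed.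

Lemma rsum_const n c : rsum n (fun _ => c) = INR n * c.
Proof. induction n; simpl rsum; [simpl; lra|]. rewrite IHn, S_INR; lra. Qed.

Lemma rsum_le n f h : (forall k, (k < n)%nat -> f k <= h k) -> rsum n f <= rsum n h.
Proof.
  induction n as [|n IH]; simpl; intros H; [lra|].
  pose proof (H n ltac:(lia)).
  assert (rsum n f <= rsum n h) by (apply IH; intros; apply H; lia). lra.
Qed.

Lemma rsum_nonneg n f : (forall k, (k < n)%nat -> 0 <= f k) -> 0 <= rsum n f.
Proof.
  intros H. replace 0 with (rsum n (fun _ => 0)) by (rewrite rsum_const; ring).
  apply rsum_le; auto.
Qed.

Lemma rsum_nonpos n f : (forall k, (k < n)%nat -> f k <= 0) -> rsum n f <= 0.
Proof.
  intros H. replace 0 with (rsum n (fun _ => 0)) by (rewrite rsum_const; ring).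
  apply rsum_le; auto.
Qed.

Lemma le_rsum_term n f i : (forall k, (k < n)%nat -> 0 <= f k) -> (i < n)%nat -> f i <= rsum n f.
Proof.
  induction n as [|n IH]; simpl; intros H Hi; [lia|].
  assert (0 <= rsum n f) by (apply rsum_nonneg; intros; apply H; lia).
  destruct (Nat.eq_dec i n) as [->|]; [lra|].
  assert (f i <= rsum n f) by (apply IH; [intros; apply H|]; lia).
  pose proof (H n ltac:(lia)). lra.
Qed.

Lemma rsum_swap n m f :
  rsum n (fun i => rsum m (fun j => f i j)) = rsum m (fun j => rsum n (fun i => f i j)).
Proof.
  induction n; simpl.
  - rewrite rsum_const; simpl; lra.
  - rewrite IHn, <- rsum_add. reflexivity.
Qed.

Lemma rsum2_antisym n a : (forall i j, (i < n)%nat -> (j < n)%nat -> a j i = - a i j) ->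
  rsum n (fun i => rsum n (fun j => a i j)) = 0.
Proof.
  intros H.
  enough (rsum n (fun i => rsum n (fun j => a i j)) = - rsum n (fun i => rsum n (fun j => a i j)))
    by lra.
  rewrite (rsum_swap n n a) at 1. rewrite <- rsum_opp.
  apply rsum_ext; intros j Hj. rewrite <- rsum_opp.
  apply rsum_ext; intros i Hi. rewrite (H i j); auto; lra.
Qed.

Lemma rsum2_symmetrize n a : rsum n (fun i => rsum n (fun j => a i j)) =
  / 2 * rsum n (fun i => rsum n (fun j => a i j + a j i)).
Proof.
  rewrite (rsum_ext n (fun i => rsum n (fun j => a i j + a j i))
    (fun i => rsum n (fun j => a i j) + rsum n (fun j => a j i))) by (intros; apply rsum_add).
  rewrite rsum_add, (rsum_swap n n (fun i j => a j i)). lra.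
Qed.

Lemma rmax_ge n f i : (i < n)%nat -> f i <= rmax n f.
Proof.
  induction n; simpl; intros Hi; [lia|].
  destruct (Nat.eq_dec i n) as [->|]; [apply Rmax_r|].
  eapply Rle_trans; [apply IHn; lia | apply Rmax_l].
Qed.

Lemma rmax_nonneg n f : 0 <= rmax n f.
Proof. induction n; simpl; [lra|]. eapply Rle_trans; [apply IHn | apply Rmax_l]. Qed.

Lemma rmax_lub n f B : 0 <= B -> (forall i, (i < n)%nat -> f i <= B) -> rmax n f <= B.
Proof.
  induction n; simpl; intros HB H; auto.
  apply Rmax_lub; [apply IHn; auto | apply H; lia].
Qed.

Lemma rmax_le_compat n f h : (forall i, (i < n)%nat -> f i <= h i) -> rmax n f <= rmax n h.
Proof.
  intros H. apply rmax_lub; [apply rmax_nonneg|].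
  intros i Hi. eapply Rle_trans; [apply H; auto | apply rmax_ge; auto].
Qed.

Lemma exists_argmax n (v : nat -> R) : (1 <= n)%nat ->
  exists i, (i < n)%nat /\ forall j, (j < n)%nat -> v j <= v i.
Proof.
  induction n as [|[|n] IH]; intros H; [lia| |].
  - exists 0%nat; split; [lia|]. intros j Hj. replace j with 0%nat by lia. lra.
  - destruct IH as [i [Hi Hv]]; [lia|].
    destruct (Rle_dec (v (S n)) (v i)).
    + exists i; split; [lia|]. intros j Hj.
      destruct (Nat.eq_dec j (S n)) as [->|]; [auto | apply Hv; lia].
    + exists (S n); split; [lia|]. intros j Hj.
      destruct (Nat.eq_dec j (S n)) as [->|]; [lra|].
      pose proof (Hv j ltac:(lia)); lra.
Qed.

Section RealLimits.
Context {T : Type} {F : (T -> Prop) -> Prop} {FF : Filter F}.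

Lemma filterlimR_plus (f h : T -> R) a b : filterlim f F (locally a) -> filterlim h F (locally b) ->
  filterlim (fun x => f x + h x) F (locally (a + b)).
Proof.
  intros Hf Hh. eapply filterlim_comp_2; eauto. apply (filterlim_plus (V:=R_NormedModule)).
Qed.

Lemma filterlimR_mult (f h : T -> R) a b : filterlim f F (locally a) -> filterlim h F (locally b) ->
  filterlim (fun x => f x * h x) F (locally (a * b)).
Proof. intros Hf Hh. eapply filterlim_comp_2; eauto. apply (filterlim_mult (K:=R_AbsRing)). Qed.

Lemma filterlimR_const (c : R) : filterlim (fun _ => c) F (locally c).
Proof. apply filterlim_const. Qed.

Lemma filterlimR_continuous (f : T -> R) (h : R -> R) a :
  filterlim f F (locally a) -> continuous h a ->
  filterlim (fun x => h (f x)) F (locally (h a)).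
Proof. intros Hf Hh. eapply filterlim_comp; eauto. Qed.

Lemma filterlimR_opp (f : T -> R) a : filterlim f F (locally a) ->
  filterlim (fun x => - f x) F (locally (- a)).
Proof.
  intros Hf. replace (fun x => - f x) with (fun x => (-1) * f x)
    by (apply functional_extensionality; intros; ring).
  replace (- a) with ((-1) * a) by ring. apply filterlimR_mult; [apply filterlimR_const | exact Hf].
Qed.

Lemma filterlimR_minus (f h : T -> R) a b :
  filterlim f F (locally a) -> filterlim h F (locally b) ->
  filterlim (fun x => f x - h x) F (locally (a - b)).
Proof. intros Hf Hh. apply filterlimR_plus; [exact Hf | apply filterlimR_opp; exact Hh]. Qed.

Lemma filterlimR_rsum n (f : nat -> T -> R) (a : nat -> R) :
  (forall k, (k < n)%nat -> filterlim (f k) F (locally (a k))) ->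
  filterlim (fun x => rsum n (fun k => f k x)) F (locally (rsum n a)).
Proof.
  induction n; intros H; simpl; [apply filterlimR_const|].
  apply filterlimR_plus; [apply IHn; intros; apply H | apply H]; lia.
Qed.

Lemma filter_forall_lt {P : nat -> T -> Prop} n :
  (forall j, (j < n)%nat -> F (P j)) -> F (fun s => forall j, (j < n)%nat -> P j s).
Proof.
  induction n; intros H.
  - apply filter_forall. intros; lia.
  - apply filter_imp with (fun s => (forall j, (j < n)%nat -> P j s) /\ P n s).
    + intros s [H1 H2] j Hj. destruct (Nat.eq_dec j n) as [->|]; [auto | apply H1; lia].
    + apply filter_and; [apply IHn; intros; apply H | apply H]; lia.
Qed.
End RealLimits.

Lemma filterlim_at_right_id a : filterlim (fun x => x) (at_right a) (locally a).
Proof. intros P HP. apply filter_le_within. exact HP. Qed.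

Lemma exists_lt_of_is_lim_seq (u : nat -> R) l (y c : R) : is_lim_seq u l -> 0 < c ->
  Rbar_lt y (Rbar_mult c l) -> exists n, y < c * u n.
Proof.
  intros Hl Hc Hy. apply is_lim_seq_spec in Hl.
  destruct l as [l| |]; simpl in Hy, Hl.
  - assert (He : 0 < (c * l - y) / (2 * c)) by (apply Rdiv_lt_0_compat; lra).
    destruct (Hl (mkposreal _ He)) as [n Hn]. exists n.
    specialize (Hn n (Nat.le_refl _)). simpl in Hn. apply Rabs_lt_between in Hn.
    assert (c * ((c * l - y) / (2 * c)) = (c * l - y) / 2) by (field; lra). nra.
  - destruct (Hl (y / c)) as [n Hn]. exists n.
    specialize (Hn n (Nat.le_refl _)). apply Rmult_lt_compat_l with (r := c) in Hn; auto.
    replace (c * (y / c)) with y in Hn by (field; lra). exact Hn.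
  - destruct (Rle_dec 0 c) as [Hc0|]; [destruct (Rle_lt_or_eq_dec 0 c Hc0)|];
      simpl in Hy; try contradiction; exfalso; lra.
Qed.

Lemma inf_on_sup_on_bounds (f : R -> R) a : 0 <= a ->
  (exists m M, 0 < m /\ forall r, 0 <= r <= a -> m <= f r <= M) ->
  0 < inf_on f a /\ forall r, 0 <= r <= a -> inf_on f a <= f r <= sup_on f a.
Proof.
  intros Ha [m [M [Hm Hb]]].
  set (E := fun y => exists r, 0 <= r <= a /\ y = f r).
  destruct (Glb_Rbar_correct E) as [Hlb Hglb]. destruct (Lub_Rbar_correct E) as [Hub Hlub].
  assert (E0 : E (f 0)) by (exists 0; split; [lra | auto]).
  assert (Lm : Rbar_le m (Glb_Rbar E)) by (apply Hglb; intros x [r [Hr ->]]; apply Hb; auto).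
  assert (LM : Rbar_le (Lub_Rbar E) M) by (apply Hlub; intros x [r [Hr ->]]; apply Hb; auto).
  pose proof (Hlb _ E0). pose proof (Hub _ E0).
  unfold inf_on, sup_on. fold E.
  destruct (Glb_Rbar E) as [l| |]; simpl in *; try contradiction.
  destruct (Lub_Rbar E) as [u| |]; simpl in *; try contradiction.
  split; [lra|]. intros r Hr.
  assert (E (f r)) by (exists r; split; auto).
  pose proof (Hlb _ H1). pose proof (Hub _ H1). simpl in *. lra.
Qed.

Lemma le_at_right_limit (f : R -> R) a y c : a < y ->
  filterlim f (at_right a) (locally (f a)) -> (forall x, a < x <= y -> c <= f x) -> c <= f a.
Proof.
  intros Hay Hlim Hc.
  destruct (Rle_dec c (f a)) as [|Hne]; auto. exfalso.
  assert (He : 0 < c - f a) by lra.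
  destruct (proj1 (filterlim_locally _ _) Hlim (mkposreal _ He)) as [del Hdel]. simpl in Hdel.
  set (x := a + Rmin del (y - a) / 2).
  assert (0 < Rmin del (y - a)) by (apply Rmin_glb_lt; [apply cond_pos | lra]).
  pose proof (Rmin_l del (y - a)). pose proof (Rmin_r del (y - a)).
  assert (Hx : Rabs (f x - f a) < c - f a).
  { apply Hdel; [|unfold x; lra]. change (Rabs (x - a) < del). unfold x.
    rewrite Rabs_right by lra. lra. }
  pose proof (Hc x ltac:(unfold x; lra)). apply Rabs_lt_between in Hx. lra.
Qed.

Lemma nonincreasing_of_derive_nonpos a b (f df : R -> R) :
  (forall t, a < t <= b -> is_derive f t (df t)) -> (forall t, a < t <= b -> df t <= 0) ->
  filterlim f (at_right a) (locally (f a)) ->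
  forall x y, a <= x -> x <= y -> y <= b -> f y <= f x.
Proof.
  intros Hd Hn Hc.
  assert (Hint : forall x y, a < x -> x <= y -> y <= b -> f y <= f x).
  { intros x y Hx Hxy Hy.
    destruct (MVT_gen f x y df) as [c [Hc1 Hc2]];
      rewrite ?Rmin_left, ?Rmax_right in * by lra.
    - intros z Hz. apply Hd; lra.
    - intros z Hz. apply continuity_pt_filterlim, (ex_derive_continuous (V:=R_NormedModule)).
      eexists; apply Hd; lra.
    - assert (df c <= 0) by (apply Hn; lra). nra. }
  intros x y Hx Hxy Hy.
  destruct (Rle_lt_or_eq_dec a x Hx) as [|<-]; [apply Hint; auto|].
  destruct (Rle_lt_or_eq_dec a y Hxy) as [Hay|<-]; [|lra].
  apply (le_at_right_limit f a y); auto. intros z Hz. apply Hint; lra.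
Qed.

Lemma increment_bounds_of_derive_bounds a b (f df : R -> R) m M :
  (forall t, a < t <= b -> is_derive f t (df t)) -> (forall t, a < t <= b -> m <= df t <= M) ->
  filterlim f (at_right a) (locally (f a)) ->
  forall x y, a <= x -> x <= y -> y <= b -> m * (y - x) <= f y - f x <= M * (y - x).
Proof.
  intros Hd Hb Hc x y Hx Hxy Hy. split.
  - enough (m * y - f y <= m * x - f x) by lra.
    apply (nonincreasing_of_derive_nonpos a b (fun r => m * r - f r) (fun r => m - df r)); auto.
    + intros t Ht. apply (is_derive_minus (V:=R_NormedModule)); [|apply Hd; lra].
      auto_derive; [auto | ring].
    + intros t Ht. pose proof (Hb t Ht). lra.
    + apply filterlimR_minus; [apply filterlimR_mult; [apply filterlimR_const|]|];
        auto using filterlim_at_right_id.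
  - enough (f y - M * y <= f x - M * x) by lra.
    apply (nonincreasing_of_derive_nonpos a b (fun r => f r - M * r) (fun r => df r - M)); auto.
    + intros t Ht. apply (is_derive_minus (V:=R_NormedModule)); [apply Hd; lra|].
      auto_derive; [auto | ring].
    + intros t Ht. pose proof (Hb t Ht). lra.
    + apply filterlimR_minus; [|apply filterlimR_mult; [apply filterlimR_const|]];
        auto using filterlim_at_right_id.
Qed.

Lemma is_derive_neg_left (h : R -> R) x l a : is_derive h x l -> l < 0 -> a < x ->
  exists s, a <= s < x /\ h x < h s.
Proof.
  intros Hd Hl Ha. apply is_derive_Reals in Hd.
  destruct (Hd (- l / 2) ltac:(lra)) as [del Hdel].
  pose proof (Rmin_l (del / 2) (x - a)). pose proof (Rmin_r (del / 2) (x - a)).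
  pose proof (cond_pos del).
  assert (0 < Rmin (del / 2) (x - a)) by (apply Rmin_glb_lt; lra).
  set (e := Rmin (del / 2) (x - a)) in *.
  assert (- e <> 0) by (apply Rlt_not_eq; lra).
  assert (Rabs (- e) < del) by (rewrite Rabs_left; lra).
  specialize (Hdel (- e) ltac:(assumption) ltac:(assumption)).
  apply Rabs_lt_between in Hdel.
  exists (x + - e). split; [lra|].
  assert (Hq : (h (x + - e) - h x) / - e < 0) by lra.
  assert (Hr : h (x + - e) - h x = (h (x + - e) - h x) / - e * - e) by (field; lra).
  set (r := (h (x + - e) - h x) / - e) in *. nra.
Qed.

Lemma is_derive_rsum n (f : nat -> R -> R) (df : nat -> R) t :
  (forall k, (k < n)%nat -> is_derive (f k) t (df k)) ->
  is_derive (fun s => rsum n (fun k => f k s)) t (rsum n df).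
Proof.
  induction n; intros H; simpl.
  - apply (is_derive_const (V:=R_NormedModule)).
  - apply (is_derive_plus (V:=R_NormedModule)); [apply IHn; intros|]; apply H; lia.
Qed.

Lemma is_derive_pow2 (f : R -> R) t df :
  is_derive f t df -> is_derive (fun s => f s ^ 2) t (2 * f t * df).
Proof.
  intros H. replace (2 * f t * df) with (INR 2 * df * f t ^ 1) by (simpl; ring).
  apply (is_derive_pow f 2 t df H).
Qed.

Lemma is_derive_Rmult (f h : R -> R) t a b : is_derive f t a -> is_derive h t b ->
  is_derive (fun s => f s * h s) t (a * h t + f t * b).
Proof. intros Hf Hh. apply (is_derive_mult f h t a b Hf Hh). intros; apply Rmult_comm. Qed.

Lemma is_derive_sqrt_comp (f : R -> R) s a : is_derive f s a -> 0 < f s ->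
  is_derive (fun x => sqrt (f x)) s (a / (2 * sqrt (f s))).
Proof.
  intros Hf Hp. apply (is_derive_comp sqrt f); auto.
  apply is_derive_Reals, derivable_pt_lim_sqrt; auto.
Qed.

Lemma is_derive_plus_const (f : R -> R) s a e : is_derive f s a -> is_derive (fun x => f x + e) s a.
Proof.
  intros Hf. rewrite <- (Rplus_0_r a).
  apply (is_derive_plus (V:=R_NormedModule) f (fun _ => e)); [exact Hf |].
  apply (is_derive_const (V:=R_NormedModule)).
Qed.

Definition vnorm2 d (x : vec) := rsum d (fun k => x k ^ 2).
Definition vdot d (x y : vec) := rsum d (fun k => x k * y k).

Lemma vnorm2_nonneg d x : 0 <= vnorm2 d x.
Proof. apply rsum_nonneg; intros; apply pow2_ge_0. Qed.

Lemma vnorm_nonneg d x : 0 <= vnorm d x.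
Proof. apply sqrt_pos. Qed.

Lemma vnorm_pow2 d x : vnorm d x ^ 2 = vnorm2 d x.
Proof. apply pow2_sqrt, vnorm2_nonneg. Qed.

Lemma vnorm_le d x c : 0 <= c -> vnorm2 d x <= c ^ 2 -> vnorm d x <= c.
Proof. intros Hc H. rewrite <- (sqrt_pow2 c Hc). apply sqrt_le_1_alt, H. Qed.

Lemma vnorm_eq0_coord d x : vnorm d x = 0 -> forall k, (k < d)%nat -> x k = 0.
Proof.
  intros H k Hk.
  assert (Hx : vnorm2 d x = 0) by (rewrite <- vnorm_pow2, H; ring).
  pose proof (le_rsum_term d (fun k => x k ^ 2) k ltac:(intros; apply pow2_ge_0) Hk).
  fold (vnorm2 d x) in H0. nra.
Qed.

Lemma vdot_eq0_l d x y : vnorm d x = 0 -> vdot d x y = 0.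
Proof.
  intros H. unfold vdot. rewrite (rsum_ext d _ (fun _ => 0)) by
    (intros k Hk; rewrite (vnorm_eq0_coord d x H k Hk); ring).
  rewrite rsum_const; ring.
Qed.

Lemma Rabs_coord_le_vnorm d x k : (k < d)%nat -> Rabs (x k) <= vnorm d x.
Proof.
  intros Hk. rewrite <- sqrt_Rsqr_abs. apply sqrt_le_1_alt. unfold Rsqr.
  replace (x k * x k) with (x k ^ 2) by ring.
  apply (le_rsum_term d (fun k => x k ^ 2)); auto. intros; apply pow2_ge_0.
Qed.

Lemma vnorm2_lincomb d x y a b :
  vnorm2 d (fun k => a * x k + b * y k) =
  a ^ 2 * vnorm2 d x + 2 * a * b * vdot d x y + b ^ 2 * vnorm2 d y.
Proof.
  unfold vnorm2, vdot.
  rewrite (rsum_ext d _ (fun k => a ^ 2 * x k ^ 2 + (2 * a * b * (x k * y k) + b ^ 2 * y k ^ 2)))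
    by (intros; ring).
  rewrite !rsum_add, !rsum_scal. ring.
Qed.

Lemma vdot_le_vnorm d x y : vdot d x y <= vnorm d x * vnorm d y.
Proof.
  pose proof (vnorm_nonneg d x) as Ha. pose proof (vnorm_nonneg d y) as Hb.
  destruct (Req_dec (vnorm d x) 0) as [Hx|Hx]; [rewrite vdot_eq0_l, Hx; lra|].
  destruct (Req_dec (vnorm d y) 0) as [Hy|Hy].
  { replace (vdot d x y) with (vdot d y x) by (apply rsum_ext; intros; ring).
    rewrite vdot_eq0_l, Hy; lra. }
  pose proof (vnorm2_nonneg d (fun k => vnorm d y * x k + - vnorm d x * y k)) as P.
  rewrite vnorm2_lincomb, <- !vnorm_pow2 in P.
  assert (0 < vnorm d x * vnorm d y) by (apply Rmult_lt_0_compat; lra).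
  nra.
Qed.

Lemma vnorm_vsub_sym d x y : vnorm d (vsub x y) = vnorm d (vsub y x).
Proof. unfold vnorm. f_equal. apply rsum_ext; intros; unfold vsub; ring. Qed.

Lemma vnorm2_vsub d x y : vnorm2 d (vsub x y) = vnorm2 d x + vnorm2 d y - 2 * vdot d x y.
Proof.
  unfold vnorm2, vdot, vsub.
  rewrite (rsum_ext d _ (fun k => x k ^ 2 + (y k ^ 2 + (-2) * (x k * y k)))) by (intros; ring).
  rewrite !rsum_add, !rsum_scal. ring.
Qed.

Lemma vdot_rsum_r d n x (f : nat -> vec) :
  vdot d x (fun k => rsum n (fun j => f j k)) = rsum n (fun j => vdot d x (f j)).
Proof.
  unfold vdot. rewrite <- rsum_swap. apply rsum_ext; intros k Hk. apply eq_sym, rsum_scal.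
Qed.

Lemma vdot_vsub_vsub d x y u v :
  vdot d (vsub x y) (vsub u v) = vdot d x u + vdot d y v - vdot d x v - vdot d y u.
Proof.
  unfold vdot, vsub. rewrite <- !rsum_add, <- !rsum_sub. apply rsum_ext; intros; ring.
Qed.

Lemma vdot_vsub_r d x u v : vdot d x (vsub u v) = vdot d x u - vdot d x v.
Proof. unfold vdot, vsub. rewrite <- rsum_sub. apply rsum_ext; intros; ring. Qed.

Lemma vdot_scal_r d x c y : vdot d x (fun k => c * y k) = c * vdot d x y.
Proof. unfold vdot. rewrite <- rsum_scal. apply rsum_ext; intros; ring. Qed.

(** * The velocity control *)

Section VelocityControl.
Variables (g g' : R -> R) (d : nat) (b m M : R).
Hypothesis g0 : g 0 = 0.
Hypothesis g_derive : forall r, 0 < r -> is_derive g r (g' r).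
Hypothesis g_right_cont : filterlim g (at_right 0) (locally (g 0)).
Hypothesis m_pos : 0 < m.
Hypothesis g'_bounds : forall r, 0 <= r <= b -> m <= g' r <= M.

Lemma g_increment_bounds x y : 0 <= x -> x <= y -> y <= b ->
  m * (y - x) <= g y - g x <= M * (y - x).
Proof.
  apply (increment_bounds_of_derive_bounds 0 b g g'); auto.
  - intros t Ht. apply g_derive; lra.
  - intros t Ht. apply g'_bounds; lra.
Qed.

Lemma g_sub_bounds x y : 0 <= x <= b -> 0 <= y <= b ->
  0 <= (x - y) * (g x - g y - m * (x - y)) /\ (g x - g y) ^ 2 <= M ^ 2 * (x - y) ^ 2.
Proof.
  intros Hx Hy. destruct (Rle_dec x y).
  - pose proof (g_increment_bounds x y ltac:(lra) ltac:(lra) ltac:(lra)).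
    split; [nra|]. assert (0 <= g y - g x) by nra. nra.
  - pose proof (g_increment_bounds y x ltac:(lra) ltac:(lra) ltac:(lra)).
    split; [nra|]. assert (0 <= g x - g y) by nra. nra.
Qed.

Lemma Gvel_scale p : vnorm d p <= b -> exists u, m <= u <= M /\
  g (vnorm d p) = u * vnorm d p /\ forall k, (k < d)%nat -> Gvel g d p k = u * p k.
Proof.
  intros Hp. pose proof (vnorm_nonneg d p). unfold Gvel.
  destruct (Req_EM_T (vnorm d p) 0) as [E|E].
  - exists m. pose proof (g'_bounds 0 ltac:(lra)). repeat split; try lra.
    + rewrite E, g0; ring.
    + intros k Hk. rewrite (vnorm_eq0_coord d p E k Hk). ring.
  - pose proof (g_increment_bounds 0 (vnorm d p) ltac:(lra) ltac:(lra) Hp) as L.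
    rewrite g0 in L.
    exists (g (vnorm d p) / vnorm d p). repeat split.
    + apply Rmult_le_reg_r with (vnorm d p); [lra|]. field_simplify; lra.
    + apply Rmult_le_reg_r with (vnorm d p); [lra|]. field_simplify; lra.
    + field; lra.
    + intros k Hk. field; lra.
Qed.

Lemma Gvel_monotone p q : vnorm d p <= b -> vnorm d q <= b ->
  m * vnorm2 d (vsub p q) <= vdot d (vsub p q) (vsub (Gvel g d p) (Gvel g d q)).
Proof.
  intros Hp Hq.
  destruct (Gvel_scale p Hp) as [u [Hu [Ga Gp]]]. destruct (Gvel_scale q Hq) as [v [Hv [Gb Gq]]].
  assert (E : vdot d (vsub p q) (vsub (Gvel g d p) (Gvel g d q)) =
    u * vnorm2 d p + (v * vnorm2 d q + - (u + v) * vdot d p q)).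
  { unfold vdot at 1, vsub.
    rewrite (rsum_ext d _ (fun k => u * p k ^ 2 + (v * q k ^ 2 + - (u + v) * (p k * q k))))
      by (intros k Hk; rewrite Gp, Gq by auto; ring).
    rewrite !rsum_add, !rsum_scal. reflexivity. }
  rewrite E, vnorm2_vsub, <- !vnorm_pow2. pose proof (vdot_le_vnorm d p q).
  pose proof (vnorm_nonneg d p). pose proof (vnorm_nonneg d q).
  (* With a = |p|, b = |q|, c = <p, q>, the excess over m |p - q|^2 is
     (a - b) (u a - v b - m (a - b)) + (u + v - 2 m) (a b - c), a sum of two nonnegative terms. *)
  destruct (g_sub_bounds (vnorm d p) (vnorm d q) ltac:(lra) ltac:(lra)) as [K _].
  rewrite Ga, Gb in K.
  assert (0 <= (u + v - 2 * m) * (vnorm d p * vnorm d q - vdot d p q)) by (apply Rmult_le_pos; lra).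
  nra.
Qed.

Lemma Gvel_lipschitz p q : vnorm d p <= b -> vnorm d q <= b ->
  vnorm d (vsub (Gvel g d p) (Gvel g d q)) <= M * vnorm d (vsub p q).
Proof.
  intros Hp Hq.
  destruct (Gvel_scale p Hp) as [u [Hu [Ga Gp]]]. destruct (Gvel_scale q Hq) as [v [Hv [Gb Gq]]].
  apply vnorm_le; [apply Rmult_le_pos; [lra | apply vnorm_nonneg]|].
  rewrite Rpow_mult_distr, vnorm_pow2.
  assert (E : vnorm2 d (vsub (Gvel g d p) (Gvel g d q)) =
    u ^ 2 * vnorm2 d p + (v ^ 2 * vnorm2 d q + - (2 * u * v) * vdot d p q)).
  { unfold vnorm2 at 1, vsub.
    rewrite (rsum_ext d _ (fun k => u ^ 2 * p k ^ 2 +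
                                    (v ^ 2 * q k ^ 2 + - (2 * u * v) * (p k * q k))))
      by (intros k Hk; rewrite Gp, Gq by auto; ring).
    rewrite !rsum_add, !rsum_scal. reflexivity. }
  rewrite E, vnorm2_vsub, <- !vnorm_pow2. pose proof (vdot_le_vnorm d p q).
  pose proof (vnorm_nonneg d p). pose proof (vnorm_nonneg d q).
  (* With a, b, c as in [Gvel_monotone],
     M^2 |p - q|^2 - |G p - G q|^2 = (M^2 (a - b)^2 - (u a - v b)^2) + 2 (M^2 - u v) (a b - c). *)
  destruct (g_sub_bounds (vnorm d p) (vnorm d q) ltac:(lra) ltac:(lra)) as [_ K].
  rewrite Ga, Gb in K.
  assert (0 <= (M ^ 2 - u * v) * (vnorm d p * vnorm d q - vdot d p q)) by (apply Rmult_le_pos; nra).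
  nra.
Qed.

Lemma vdot_Gvel_le p q : vnorm d q <= vnorm d p -> vnorm d p <= b ->
  vdot d p (Gvel g d q) <= vdot d p (Gvel g d p).
Proof.
  intros Hqp Hp.
  destruct (Gvel_scale p Hp) as [u [Hu [Ga Gp]]].
  destruct (Gvel_scale q ltac:(lra)) as [v [Hv [Gb Gq]]].
  unfold vdot.
  rewrite (rsum_ext d _ (fun k => v * (p k * q k))) by (intros; rewrite Gq by auto; ring).
  rewrite (rsum_ext d (fun k => p k * Gvel g d p k) (fun k => u * p k ^ 2))
    by (intros; rewrite Gp by auto; ring).
  rewrite !rsum_scal. fold (vdot d p q) (vnorm2 d p). rewrite <- vnorm_pow2.
  pose proof (vdot_le_vnorm d p q). pose proof (vnorm_nonneg d q).
  pose proof (g_increment_bounds (vnorm d q) (vnorm d p) ltac:(lra) ltac:(lra) ltac:(lra)).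
  assert (v * vdot d p q <= v * (vnorm d p * vnorm d q)) by (apply Rmult_le_compat_l; lra).
  assert (vnorm d p * g (vnorm d q) <= vnorm d p * g (vnorm d p)) by (apply Rmult_le_compat_l; nra).
  rewrite Ga, Gb in *. nra.
Qed.

End VelocityControl.

(** * A maximum principle *)

Lemma fin_choice n (P : nat -> R -> Prop) : (forall j, (j < n)%nat -> exists t, P j t) ->
  exists tau : nat -> R, forall j, (j < n)%nat -> P j (tau j).
Proof.
  induction n as [|n IH]; intros H; [exists (fun _ => 0); intros; lia|].
  destruct IH as [tau Ht]; [intros; apply H; lia|].
  destruct (H n ltac:(lia)) as [tn Htn].
  exists (fun j => if Nat.eq_dec j n then tn else tau j). intros j Hj.
  destruct (Nat.eq_dec j n) as [->|]; [auto | apply Ht; lia].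
Qed.

Lemma exists_joint_max n (h : nat -> R -> R) a b : (1 <= n)%nat -> a <= b ->
  (forall j t, (j < n)%nat -> a <= t <= b -> continuity_pt (h j) t) ->
  exists i0 t0, (i0 < n)%nat /\ a <= t0 <= b /\
    forall j t, (j < n)%nat -> a <= t <= b -> h j t <= h i0 t0.
Proof.
  intros Hn Hab Hc.
  destruct (fin_choice n (fun j tj => (forall t, a <= t <= b -> h j t <= h j tj) /\ a <= tj <= b))
    as [tau Htau].
  { intros j Hj. apply continuity_ab_maj; auto. }
  destruct (exists_argmax n (fun j => h j (tau j)) Hn) as [i0 [Hi0 Hmax]].
  exists i0, (tau i0). split; [auto | split; [apply Htau; auto|]].
  intros j t Hj Ht. eapply Rle_trans; [apply (Htau j Hj); auto | apply Hmax; auto].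
Qed.

Section MaximumPrinciple.
Variables (n : nat) (f df : nat -> R -> R).
Hypothesis n_pos : (1 <= n)%nat.
Hypothesis f_derive : forall i t, (i < n)%nat -> 0 < t -> is_derive (f i) t (df i t).
Hypothesis df_nonpos_at_max : forall i t, (i < n)%nat -> 0 < t ->
  (forall j, (j < n)%nat -> f j t <= f i t) -> df i t <= 0.

(* Tilting by [- c t] makes the derivative at a maximum strictly negative,
   so the maximum over [a, T] of the tilted family is reached at time a. *)
Lemma max_principle_from a T : 0 < a <= T ->
  forall i, (i < n)%nat -> f i T <= rmax n (fun j => f j a).
Proof.
  intros Ha i Hi. apply Rle_plus_epsilon. intros eps Heps.
  set (c := eps / T). assert (Hc : 0 < c) by (apply Rdiv_lt_0_compat; lra).
  set (h := fun j t => f j t - c * t).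
  assert (h_derive : forall j t, (j < n)%nat -> 0 < t -> is_derive (h j) t (df j t - c)).
  { intros j t Hj Ht. apply (is_derive_minus (V:=R_NormedModule)); [apply f_derive; auto|].
    auto_derive; [auto | ring]. }
  destruct (exists_joint_max n h a T n_pos ltac:(lra)) as [i0 [t0 [Hi0 [Ht0 Hmax]]]].
  { intros j t Hj Ht. apply continuity_pt_filterlim, (ex_derive_continuous (V:=R_NormedModule)).
    eexists; apply h_derive; auto; lra. }
  assert (Ht0a : t0 = a).
  { destruct (Rle_lt_or_eq_dec a t0 (proj1 Ht0)) as [Hlt|]; auto. exfalso.
    assert (df i0 t0 <= 0).
    { apply df_nonpos_at_max; auto; [lra|]. intros j Hj.
      pose proof (Hmax j t0 Hj Ht0). unfold h in *. lra. }
    destruct (is_derive_neg_left (h i0) t0 (df i0 t0 - c) a) as [s [Hs Hhs]]; auto; [|lra|].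
    - apply h_derive; auto; lra.
    - pose proof (Hmax i0 s Hi0 ltac:(lra)). lra. }
  subst t0. pose proof (Hmax i T Hi ltac:(lra)).
  pose proof (rmax_ge n (fun j => f j a) i0 Hi0). unfold h, c in *.
  replace (eps / T * T) with eps in * by (field; lra). nra.
Qed.

Hypothesis f_right_cont : forall i, (i < n)%nat -> filterlim (f i) (at_right 0) (locally (f i 0)).

Lemma max_principle t : 0 <= t -> forall i, (i < n)%nat -> f i t <= rmax n (fun j => f j 0).
Proof.
  intros Ht i Hi.
  destruct (Rle_lt_or_eq_dec 0 t Ht) as [Htp|<-]; [|apply (rmax_ge n (fun j => f j 0)); auto].
  apply Rle_plus_epsilon. intros eta Heta.
  destruct (filter_forall_lt (F := at_right 0)
              (P := fun j s => ball (f j 0) eta (f j s)) n) as [del Hdel].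
  { intros j Hj.
    exact (proj1 (filterlim_locally (f j) (f j 0)) (f_right_cont j Hj) (mkposreal eta Heta)). }
  pose proof (cond_pos del). pose proof (Rmin_l (del / 2) t). pose proof (Rmin_r (del / 2) t).
  assert (0 < Rmin (del / 2) t) by (apply Rmin_glb_lt; lra).
  set (s := Rmin (del / 2) t) in *.
  eapply Rle_trans; [apply (max_principle_from s t); auto; lra|].
  apply rmax_lub; [pose proof (rmax_nonneg n (fun j => f j 0)); lra|].
  intros j Hj.
  assert (Hs : Rabs (f j s - f j 0) < eta).
  { assert (Hball : ball 0 del s).
    { change (Rabs (s - 0) < del). rewrite Rminus_0_r, Rabs_right; lra. }
    exact (Hdel s Hball ltac:(lra) j Hj). }
  apply Rabs_lt_between in Hs. pose proof (rmax_ge n (fun j => f j 0) j Hj). lra.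
Qed.

End MaximumPrinciple.

Lemma rsum2_vdot_vsub_centered N d (x F : nat -> vec) :
  (forall k, rsum N (fun j => F j k) = 0) ->
  rsum N (fun i => rsum N (fun j => vdot d (vsub (x i) (x j)) (vsub (F i) (F j)))) =
  2 * INR N * rsum N (fun i => vdot d (x i) (F i)).
Proof.
  intros HF. set (A := rsum N (fun i => vdot d (x i) (F i))).
  assert (Z : forall i, rsum N (fun j => vdot d (x i) (F j)) = 0).
  { intros i. rewrite <- vdot_rsum_r. unfold vdot.
    rewrite (rsum_ext d _ (fun _ => 0)) by (intros; rewrite HF; ring). rewrite rsum_const; ring. }
  assert (Zt : rsum N (fun i => rsum N (fun j => vdot d (x j) (F i))) = 0).
  { rewrite (rsum_swap N N (fun i j => vdot d (x j) (F i))).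
    rewrite (rsum_ext N _ (fun _ => 0)) by (intros; apply Z). rewrite rsum_const; ring. }
  rewrite (rsum_ext N _ (fun i => INR N * vdot d (x i) (F i) + A - 0
                                  - rsum N (fun j => vdot d (x j) (F i)))).
  2:{ intros i Hi.
      rewrite (rsum_ext N _ (fun j => vdot d (x i) (F i) + vdot d (x j) (F j)
                                      - vdot d (x i) (F j) - vdot d (x j) (F i)))
        by (intros; apply vdot_vsub_vsub).
      rewrite !rsum_sub, rsum_add, rsum_const, Z. reflexivity. }
  rewrite !rsum_sub, rsum_add, rsum_scal, !rsum_const, Zt. fold A. ring.
Qed.

(* The symmetric weights make the total force vanish; symmetrizing then turns
   the power of the forces into a sum over pairs. *)
Lemma force_identity N d c (x G : nat -> vec) (w : nat -> nat -> R) : (1 <= N)%nat ->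
  (forall i j, (i < N)%nat -> (j < N)%nat -> w i j = w j i) ->
  let F := fun i k => c / INR N * rsum N (fun j => w i j * (G j k - G i k)) in
  rsum N (fun i => rsum N (fun j => vdot d (vsub (x i) (x j)) (vsub (F i) (F j)))) =
  - c * rsum N (fun i => rsum N (fun j => w i j * vdot d (vsub (x i) (x j)) (vsub (G i) (G j)))).
Proof.
  intros HN Hw F.
  assert (HN0 : INR N <> 0) by (apply not_0_INR; lia).
  rewrite rsum2_vdot_vsub_centered.
  2:{ intros k. unfold F. rewrite rsum_scal, rsum2_antisym; [ring|].
      intros i j Hi Hj. rewrite Hw by auto. ring. }
  assert (Fi : forall i, vdot d (x i) (F i) =
            c / INR N * rsum N (fun j => w i j * vdot d (x i) (vsub (G j) (G i)))).
  { intros i. unfold F. rewrite vdot_scal_r, vdot_rsum_r. f_equal.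
    apply rsum_ext; intros j Hj. apply vdot_scal_r. }
  rewrite (rsum_ext N _ _ (fun i _ => Fi i)), rsum_scal, rsum2_symmetrize.
  rewrite (rsum_ext N (fun i => rsum N (fun j => w i j * vdot d (x i) (vsub (G j) (G i))
                                               + w j i * vdot d (x j) (vsub (G i) (G j))))
                      (fun i => - rsum N (fun j =>
                                  w i j * vdot d (vsub (x i) (x j)) (vsub (G i) (G j))))).
  2:{ intros i Hi. rewrite <- rsum_opp. apply rsum_ext; intros j Hj.
      rewrite (Hw j i), vdot_vsub_vsub, !vdot_vsub_r by auto. ring. }
  rewrite rsum_opp. field. exact HN0.
Qed.

Lemma is_derive_vnorm2 d (X : R -> vec) (DX : vec) t :
  (forall k, (k < d)%nat -> is_derive (fun s => X s k) t (DX k)) ->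
  is_derive (fun s => vnorm2 d (X s)) t (2 * vdot d (X t) DX).
Proof.
  intros H. unfold vnorm2, vdot. rewrite <- rsum_scal.
  replace (rsum d (fun k => 2 * (X t k * DX k))) with (rsum d (fun k => 2 * X t k * DX k))
    by (apply rsum_ext; intros; ring).
  apply (is_derive_rsum d (fun k s => X s k ^ 2)). intros k Hk. apply is_derive_pow2; auto.
Qed.

Lemma filterlim_vnorm2 d (X : R -> vec) (X0 : vec) a :
  (forall k, (k < d)%nat -> filterlim (fun s => X s k) (at_right a) (locally (X0 k))) ->
  filterlim (fun s => vnorm2 d (X s)) (at_right a) (locally (vnorm2 d X0)).
Proof.
  intros H. apply (filterlimR_rsum d (fun k s => X s k ^ 2)). intros k Hk.
  replace (X0 k ^ 2) with (X0 k * X0 k) by ring.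
  replace (fun s => X s k ^ 2) with (fun s => X s k * X s k)
    by (apply functional_extensionality; intros; ring).
  apply filterlimR_mult; auto.
Qed.

Definition config_sq N d (x : nat -> vec) : R :=
  rsum N (fun i => rsum N (fun j => vnorm2 d (vsub (x i) (x j)))).

Lemma config_sq_nonneg N d x : 0 <= config_sq N d x.
Proof. apply rsum_nonneg; intros; apply rsum_nonneg; intros; apply vnorm2_nonneg. Qed.

Lemma vnorm2_le_config_sq N d x i j : (i < N)%nat -> (j < N)%nat ->
  vnorm2 d (vsub (x i) (x j)) <= config_sq N d x.
Proof.
  intros Hi Hj. eapply Rle_trans; [|apply (le_rsum_term N _ i); auto].
  - apply (le_rsum_term N (fun j => vnorm2 d (vsub (x i) (x j)))); auto.
    intros; apply vnorm2_nonneg.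
  - intros; apply rsum_nonneg; intros; apply vnorm2_nonneg.
Qed.

Lemma config_norm_sqrt N d x : config_norm N d x = sqrt (config_sq N d x).
Proof.
  unfold config_norm, config_sq. f_equal.
  apply rsum_ext; intros; apply rsum_ext; intros; apply vnorm_pow2.
Qed.

Lemma vnorm_le_DQ N d (x : nat -> R -> vec) t i j : (i < N)%nat -> (j < N)%nat ->
  vnorm d (vsub (x i t) (x j t)) <= DQ N d x t.
Proof.
  intros Hi Hj. eapply Rle_trans; [|apply (rmax_ge N _ i Hi)].
  apply (rmax_ge N (fun j => vnorm d (vsub (x i t) (x j t))) j Hj).
Qed.

Lemma DQ_le_sqrt_config_sq N d (x : nat -> R -> vec) t :
  DQ N d x t <= sqrt (config_sq N d (fun i => x i t)).
Proof.
  apply rmax_lub; [apply sqrt_pos|]. intros i Hi.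
  apply rmax_lub; [apply sqrt_pos|]. intros j Hj.
  apply sqrt_le_1_alt, (vnorm2_le_config_sq N d (fun i => x i t)); auto.
Qed.

Lemma is_derive_config_sq N d (x : nat -> R -> vec) (dx : nat -> vec) t :
  (forall i k, (i < N)%nat -> (k < d)%nat -> is_derive (fun s => x i s k) t (dx i k)) ->
  is_derive (fun s => config_sq N d (fun i => x i s)) t
    (2 * rsum N (fun i => rsum N (fun j => vdot d (vsub (x i t) (x j t)) (vsub (dx i) (dx j))))).
Proof.
  intros H. rewrite <- rsum_scal.
  replace (rsum N (fun i =>
             2 * rsum N (fun j => vdot d (vsub (x i t) (x j t)) (vsub (dx i) (dx j)))))
    with (rsum N (fun i =>
            rsum N (fun j => 2 * vdot d (vsub (x i t) (x j t)) (vsub (dx i) (dx j)))))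
    by (apply rsum_ext; intros; apply rsum_scal).
  apply (is_derive_rsum N (fun i s => rsum N (fun j => vnorm2 d (vsub (x i s) (x j s))))).
  intros i Hi. apply (is_derive_rsum N (fun j s => vnorm2 d (vsub (x i s) (x j s)))).
  intros j Hj. apply (is_derive_vnorm2 d (fun s => vsub (x i s) (x j s))).
  intros k Hk. apply (is_derive_minus (V:=R_NormedModule)); auto.
Qed.

Lemma filterlim_config_sq N d (x : nat -> R -> vec) :
  (forall i k, (i < N)%nat -> (k < d)%nat ->
     filterlim (fun s => x i s k) (at_right 0) (locally (x i 0 k))) ->
  filterlim (fun s => config_sq N d (fun i => x i s)) (at_right 0)
    (locally (config_sq N d (fun i => x i 0))).
Proof.
  intros H.
  apply (filterlimR_rsum N (fun i s => rsum N (fun j => vnorm2 d (vsub (x i s) (x j s))))).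
  intros i Hi. apply (filterlimR_rsum N (fun j s => vnorm2 d (vsub (x i s) (x j s)))).
  intros j Hj. apply (filterlim_vnorm2 d (fun s => vsub (x i s) (x j s))).
  intros k Hk. apply filterlimR_minus; auto.
Qed.

Lemma rsum2_CauchySchwarz n (a b : nat -> nat -> R) :
  rsum n (fun i => rsum n (fun j => a i j * b i j)) <=
  sqrt (rsum n (fun i => rsum n (fun j => a i j ^ 2))) *
  sqrt (rsum n (fun i => rsum n (fun j => b i j ^ 2))).
Proof.
  assert (E : forall c : nat -> nat -> R,
            vnorm n (fun i => vnorm n (c i)) =
            sqrt (rsum n (fun i => rsum n (fun j => c i j ^ 2)))).
  { intros c. unfold vnorm at 1. f_equal. apply rsum_ext; intros. apply vnorm_pow2. }
  rewrite <- !E.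
  eapply Rle_trans; [apply rsum_le; intros i Hi; apply (vdot_le_vnorm n (a i) (b i))|].
  apply (vdot_le_vnorm n (fun i => vnorm n (a i)) (fun i => vnorm n (b i))).
Qed.

Lemma rsum2_vnorm_mul_le N d (x y : nat -> vec) :
  rsum N (fun i => rsum N (fun j => vnorm d (vsub (x i) (x j)) * vnorm d (vsub (y i) (y j))))
  <= sqrt (config_sq N d x) * sqrt (config_sq N d y).
Proof.
  unfold config_sq.
  rewrite (rsum_ext N (fun i => rsum N (fun j => vnorm2 d (vsub (x i) (x j))))
             (fun i => rsum N (fun j => vnorm d (vsub (x i) (x j)) ^ 2)))
    by (intros; apply rsum_ext; intros; symmetry; apply vnorm_pow2).
  rewrite (rsum_ext N (fun i => rsum N (fun j => vnorm2 d (vsub (y i) (y j))))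
             (fun i => rsum N (fun j => vnorm d (vsub (y i) (y j)) ^ 2)))
    by (intros; apply rsum_ext; intros; symmetry; apply vnorm_pow2).
  apply rsum2_CauchySchwarz.
Qed.

Lemma filterlim_at_right_exp_scal a c :
  filterlim (fun s => exp (c * s)) (at_right a) (locally (exp (c * a))).
Proof.
  apply filterlimR_continuous; [|apply continuous_exp].
  apply filterlimR_mult; [apply filterlimR_const | apply filterlim_at_right_id].
Qed.

Lemma le_exp_of_derive_le (f df : R -> R) c T : 0 <= T ->
  (forall t, 0 < t <= T -> is_derive f t (df t)) -> (forall t, 0 < t <= T -> df t <= - c * f t) ->
  filterlim f (at_right 0) (locally (f 0)) -> f T <= f 0 * exp (- c * T).
Proof.
  intros HT Hd Hdf Hc.
  assert (H : f T * exp (c * T) <= f 0 * exp (c * 0)).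
  { apply (nonincreasing_of_derive_nonpos 0 T (fun s => f s * exp (c * s))
             (fun s => df s * exp (c * s) + f s * (c * exp (c * s)))); try lra.
    - intros s Hs. apply (is_derive_Rmult f (fun s => exp (c * s))); [apply Hd; auto|].
      auto_derive; [auto | ring].
    - intros s Hs. pose proof (Hdf s Hs). pose proof (exp_pos (c * s)). nra.
    - apply filterlimR_mult; [exact Hc | apply filterlim_at_right_exp_scal]. }
  rewrite Rmult_0_r, exp_0, Rmult_1_r in H.
  replace (f T) with (f T * exp (c * T) * exp (- c * T))
    by (rewrite Rmult_assoc, <- exp_plus; replace (c * T + - c * T) with 0 by ring;
        rewrite exp_0; ring).
  apply Rmult_le_compat_r; [left; apply exp_pos | exact H].
Qed.

Lemma abs_sub_le_of_derive_exp_bound (f df : R -> R) K C : 0 < C ->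
  (forall t, 0 < t -> is_derive f t (df t)) ->
  (forall t, 0 < t -> Rabs (df t) <= K * exp (- C * t)) ->
  filterlim f (at_right 0) (locally (f 0)) -> forall t, 0 <= t -> Rabs (f t - f 0) <= K / C.
Proof.
  intros HC Hd Hdf Hc t Ht.
  assert (Hexp : forall s, is_derive (fun s => K / C * exp (- C * s)) s (- K * exp (- C * s)))
    by (intros; auto_derive; [auto | field; lra]).
  assert (Hlim : filterlim (fun s => K / C * exp (- C * s)) (at_right 0)
                           (locally (K / C * exp (- C * 0))))
    by (apply filterlimR_mult; [apply filterlimR_const | apply filterlim_at_right_exp_scal]).
  assert (Up : f t + K / C * exp (- C * t) <= f 0 + K / C * exp (- C * 0)).
  { apply (nonincreasing_of_derive_nonpos 0 t (fun s => f s + K / C * exp (- C * s))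
             (fun s => df s + - K * exp (- C * s))); try lra.
    - intros s Hs. apply (is_derive_plus (V:=R_NormedModule)); [apply Hd; lra | apply Hexp].
    - intros s Hs. pose proof (Hdf s ltac:(lra)) as Hb. apply Rabs_le_between in Hb. lra.
    - apply filterlimR_plus; auto. }
  assert (Low : - f t + K / C * exp (- C * t) <= - f 0 + K / C * exp (- C * 0)).
  { apply (nonincreasing_of_derive_nonpos 0 t (fun s => - f s + K / C * exp (- C * s))
             (fun s => - df s + - K * exp (- C * s))); try lra.
    - intros s Hs. apply (is_derive_plus (V:=R_NormedModule)); [|apply Hexp].
      apply (is_derive_opp (V:=R_NormedModule)), Hd; lra.
    - intros s Hs. pose proof (Hdf s ltac:(lra)) as Hb. apply Rabs_le_between in Hb. lra.
    - apply filterlimR_plus; [apply filterlimR_opp|]; auto. }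
  rewrite Rmult_0_r, exp_0 in Up, Low.
  assert (0 <= K / C * exp (- C * t)).
  { assert (0 <= K).
    { pose proof (Hdf 1 ltac:(lra)). pose proof (Rabs_pos (df 1)).
      pose proof (exp_pos (- C * 1)). set (e := exp (- C * 1)) in *. nra. }
    pose proof (exp_pos (- C * t)).
    apply Rmult_le_pos; [apply Rdiv_le_0_compat|]; lra. }
  apply Rabs_le_between. lra.
Qed.

Lemma is_lim_exp_decay B C : 0 < C -> is_lim (fun t => B * exp (- C * t)) p_infty 0.
Proof.
  intros HC. replace (Finite 0) with (Rbar_mult B 0) by (simpl; f_equal; ring).
  apply (is_lim_scal_l (fun t => exp (- C * t)) B p_infty 0).
  eapply is_lim_comp; [apply is_lim_exp_m| |].
  - replace m_infty with (Rbar_mult (- C) p_infty).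
    + apply is_lim_scal_l, is_lim_id.
    + simpl. destruct (Rle_dec 0 (- C)); [exfalso; lra | reflexivity].
  - exists 0. intros; discriminate.
Qed.

Lemma sqrt_add_le a e : 0 <= a -> 0 <= e -> sqrt (a + e) <= sqrt a + sqrt e.
Proof.
  intros Ha He. pose proof (sqrt_pos a). pose proof (sqrt_pos e).
  rewrite <- (sqrt_pow2 (sqrt a + sqrt e)) by lra. apply sqrt_le_1_alt.
  replace ((sqrt a + sqrt e) ^ 2) with (sqrt a * sqrt a + sqrt e * sqrt e + 2 * sqrt a * sqrt e)
    by ring.
  rewrite !sqrt_sqrt by auto. nra.
Qed.

Lemma sqrt_sub_ratio_le P e : 0 <= P -> 0 < e -> sqrt P - P / sqrt (P + e) <= sqrt e.
Proof.
  intros HP He.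
  pose proof (sqrt_pos P). assert (0 < sqrt (P + e)) by (apply sqrt_lt_R0; lra).
  assert (sqrt P <= sqrt (P + e)) by (apply sqrt_le_1_alt; lra).
  pose proof (sqrt_add_le P e HP ltac:(lra)).
  replace (sqrt P - P / sqrt (P + e)) with ((sqrt (P + e) - sqrt P) * (sqrt P / sqrt (P + e))).
  2:{ pose proof (sqrt_sqrt P HP) as E. set (sP := sqrt (P + e)) in *. set (rP := sqrt P) in *.
      rewrite <- E. field. lra. }
  assert (0 <= sqrt P / sqrt (P + e) <= 1).
  { split; [apply Rdiv_le_0_compat; lra|].
    apply Rmult_le_reg_r with (sqrt (P + e)); [lra|]. field_simplify; lra. }
  nra.
Qed.

(* The left-hand side is the time derivative of [lyapunov] below, where [dP] and [dQ]
   are those of [||P||^2] and [||Q||^2], [w = psi (sqrt Q)] and [wQ = psi (sqrt (Q + e))]. *)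
Lemma lyapunov_rate_nonpos k m M Bp P Q dP dQ e w wQ :
  0 < k -> 0 < m -> 0 < M -> 0 < e -> 0 <= P -> 0 <= Q -> 0 <= wQ <= w -> w <= Bp ->
  dP <= - 2 * k * m * w * P -> dQ <= 2 * M * sqrt Q * sqrt P ->
  dP / (2 * sqrt (P + e)) + k * m / M * (dQ / (2 * sqrt (Q + e)) * wQ) - k * m * Bp * sqrt e <= 0.
Proof.
  intros Hk Hm HM He HP HQ Hw HwB HdP HdQ.
  pose proof (sqrt_pos P). pose proof (sqrt_pos Q). pose proof (sqrt_pos e).
  assert (HsP : 0 < sqrt (P + e)) by (apply sqrt_lt_R0; lra).
  assert (HsQ : 0 < sqrt (Q + e)) by (apply sqrt_lt_R0; lra).
  assert (sqrt Q <= sqrt (Q + e)) by (apply sqrt_le_1_alt; lra).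
  assert (T1 : dP / (2 * sqrt (P + e)) <= - (k * m * w) * (P / sqrt (P + e))).
  { unfold Rdiv. apply Rmult_le_reg_r with (2 * sqrt (P + e)); [lra|].
    rewrite Rmult_assoc, Rinv_l by lra.
    replace (- (k * m * w) * (P * / sqrt (P + e)) * (2 * sqrt (P + e))) with (- 2 * k * m * w * P)
      by (field; lra). lra. }
  assert (T2 : dQ / (2 * sqrt (Q + e)) <= M * sqrt P).
  { assert (0 <= M * sqrt P) by (apply Rmult_le_pos; lra).
    assert (dQ <= M * sqrt P * (2 * sqrt (Q + e))) by nra.
    unfold Rdiv. apply Rmult_le_reg_r with (2 * sqrt (Q + e)); [lra|].
    rewrite Rmult_assoc, Rinv_l by lra. lra. }
  assert (T3 : k * m / M * (dQ / (2 * sqrt (Q + e)) * wQ) <= k * m * w * sqrt P).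
  { apply Rle_trans with (k * m / M * (M * sqrt P * wQ)).
    - apply Rmult_le_compat_l; [apply Rdiv_le_0_compat; nra|]. apply Rmult_le_compat_r; lra.
    - replace (k * m / M * (M * sqrt P * wQ)) with (k * m * sqrt P * wQ) by (field; lra).
      assert (0 <= k * m * sqrt P) by (apply Rmult_le_pos; nra). nra. }
  pose proof (sqrt_sub_ratio_le P e HP He).
  assert (k * m * w * (sqrt P - P / sqrt (P + e)) <= k * m * Bp * sqrt e).
  { assert (0 <= k * m) by nra.
    apply Rle_trans with (k * m * w * sqrt e).
    - apply Rmult_le_compat_l; [apply Rmult_le_pos | ]; lra.
    - apply Rmult_le_compat_r; [lra|]. apply Rmult_le_compat_l; lra. }
  lra.
Qed.

(** * The primitive of the communication kernel *)

Section KernelPrimitive.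
Variables (psi : R -> R) (L Bp : R).
Hypothesis psi_pos : forall r, 0 <= r -> 0 < psi r.
Hypothesis psi_bound : forall r, 0 <= r -> psi r <= Bp.
Hypothesis psi_lip : forall r s, 0 <= r -> 0 <= s -> Rabs (psi r - psi s) <= L * Rabs (r - s).

(* [psi] is only given on [0, +oo); extending it by [psi 0] to the left
   gives a continuous function on R, with a primitive differentiable everywhere. *)
Definition psi_ext x := psi (Rmax 0 x).
Definition Psi x := RInt psi_ext 0 x.

Lemma psi_ext_pos x : 0 < psi_ext x.
Proof. apply psi_pos, Rmax_l. Qed.

Lemma psi_ext_le x : psi_ext x <= Bp.
Proof. apply psi_bound, Rmax_l. Qed.

Lemma psi_ext_eq x : 0 <= x -> psi_ext x = psi x.
Proof. intros. unfold psi_ext. rewrite Rmax_right; auto. Qed.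

Lemma psi_ext_continuous x : continuous psi_ext x.
Proof.
  assert (HL : 0 <= L).
  { pose proof (psi_lip 0 1 ltac:(lra) ltac:(lra)). rewrite Rminus_0_l, Rabs_Ropp, Rabs_R1 in H.
    pose proof (Rabs_pos (psi 0 - psi 1)). lra. }
  apply (proj2 (filterlim_locally _ _)). intros eps.
  assert (Hd : 0 < eps / (L + 1)) by (apply Rdiv_lt_0_compat; [apply cond_pos | lra]).
  exists (mkposreal _ Hd). intros y Hy. change (Rabs (y - x) < eps / (L + 1)) in Hy.
  change (Rabs (psi_ext y - psi_ext x) < eps). unfold psi_ext.
  assert (Hmax : Rabs (Rmax 0 y - Rmax 0 x) <= Rabs (y - x)).
  { unfold Rmax. destruct (Rle_dec 0 y), (Rle_dec 0 x); apply Rabs_le_between;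
      pose proof (Rle_abs (y - x)); pose proof (Rabs_maj2 (y - x)); lra. }
  eapply Rle_lt_trans; [apply psi_lip; apply Rmax_l|].
  apply Rle_lt_trans with (L * Rabs (y - x)); [apply Rmult_le_compat_l; auto|].
  apply Rmult_lt_compat_l with (r := L + 1) in Hy; [|lra].
  replace ((L + 1) * (eps / (L + 1))) with (pos eps) in Hy by (field; lra).
  pose proof (Rabs_pos (y - x)). nra.
Qed.

Lemma ex_RInt_psi_ext a b : ex_RInt psi_ext a b.
Proof.
  apply (ex_RInt_continuous (V:=R_CompleteNormedModule)). intros; apply psi_ext_continuous.
Qed.

Lemma is_derive_Psi x : is_derive Psi x (psi_ext x).
Proof.
  apply (is_derive_RInt psi_ext Psi 0 x); [|apply psi_ext_continuous].
  apply filter_forall. intros y. apply (RInt_correct (V:=R_CompleteNormedModule)), ex_RInt_psi_ext.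
Qed.

Lemma Psi_continuous x : continuous Psi x.
Proof. apply (ex_derive_continuous (V:=R_NormedModule)). eexists; apply is_derive_Psi. Qed.

Lemma Psi_sub x y : Psi y - Psi x = RInt psi_ext x y.
Proof.
  unfold Psi. rewrite <- (RInt_Chasles psi_ext 0 x y) by apply ex_RInt_psi_ext.
  simpl. unfold plus; simpl. ring.
Qed.

Lemma Psi_sub_bounds x y : x <= y -> 0 <= Psi y - Psi x <= Bp * (y - x).
Proof.
  intros Hxy. rewrite Psi_sub. split.
  - replace 0 with (RInt (fun _ => 0) x y) by (rewrite RInt_const; apply Rmult_0_r).
    apply RInt_le; auto using ex_RInt_const, ex_RInt_psi_ext.
    intros; left; apply psi_ext_pos.
  - replace (Bp * (y - x)) with (RInt (fun _ => Bp) x y)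
      by (rewrite RInt_const; unfold scal; simpl; unfold mult; simpl; ring).
    apply RInt_le; auto using ex_RInt_const, ex_RInt_psi_ext.
    intros; apply psi_ext_le.
Qed.

Lemma Psi_le x y : x <= y -> Psi x <= Psi y.
Proof. intros H. pose proof (Psi_sub_bounds x y H). lra. Qed.

Lemma RInt_psi_eq_Psi_sub a x : 0 <= a -> 0 <= x -> RInt psi a x = Psi x - Psi a.
Proof.
  intros Ha Hx. rewrite Psi_sub. apply RInt_ext. intros y Hy.
  symmetry; apply psi_ext_eq.
  pose proof (Rmin_glb a x 0). unfold Rmin in Hy. destruct (Rle_dec a x); lra.
Qed.

Lemma is_derive_Psi_comp (f : R -> R) s a : is_derive f s a ->
  is_derive (fun x => Psi (f x)) s (a * psi_ext (f s)).
Proof. intros Hf. apply (is_derive_comp Psi f); [apply is_derive_Psi | exact Hf]. Qed.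

Lemma improper_int_as_limit a : 0 <= a ->
  is_lim_seq (fun n => Psi (INR n) - Psi a) (improper_int psi a).
Proof.
  intros Ha. unfold improper_int, Lim. simpl Rbar_loc_seq.
  rewrite (Lim_seq_ext _ (fun n => Psi (INR n) - Psi a))
    by (intros n; apply RInt_psi_eq_Psi_sub; auto using pos_INR).
  apply Lim_seq_correct, ex_lim_seq_incr. intros n.
  pose proof (Psi_le (INR n) (INR (S n)) ltac:(rewrite S_INR; lra)). lra.
Qed.

Lemma improper_int_p_infty a : 0 <= a ->
  improper_int psi 0 = p_infty -> improper_int psi a = p_infty.
Proof.
  intros Ha H0.
  pose proof (improper_int_as_limit 0 ltac:(lra)) as L0. rewrite H0 in L0.
  assert (Hlim : is_lim_seq (fun n => (Psi (INR n) - Psi 0) - (Psi a - Psi 0)) p_infty).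
  { apply (is_lim_seq_minus _ _ p_infty (Psi a - Psi 0)); [exact L0 | apply is_lim_seq_const|].
    constructor. }
  rewrite <- (is_lim_seq_unique _ _ Hlim), <- (is_lim_seq_unique _ _ (improper_int_as_limit a Ha)).
  apply Lim_seq_ext. intros n. ring.
Qed.

End KernelPrimitive.

(** * The Cucker-Smale flow *)

Section CuckerSmale.
Variables (N d : nat) (kappa : R) (g g' psi : R -> R) (q p : nat -> R -> vec).
Hypothesis N_pos : (1 <= N)%nat.
Hypothesis kappa_pos : 0 < kappa.
Hypothesis g0 : g 0 = 0.
Hypothesis g_derive : forall r, 0 < r -> is_derive g r (g' r).
Hypothesis g_right_cont : filterlim g (at_right 0) (locally (g 0)).
Hypothesis g'_bounded :
  forall b, 0 <= b -> exists m M, 0 < m /\ forall r, 0 <= r <= b -> m <= g' r <= M.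
Hypothesis psi_pos : forall r, 0 <= r -> 0 < psi r.
Hypothesis psi_noninc : forall r s, 0 <= r -> 0 <= s -> (psi r - psi s) * (r - s) <= 0.
Hypothesis solution : CS_solution N d kappa g psi q p.

Definition force i t : vec := fun k => CS_force N d kappa g psi q p i t k.
Definition weight i j t := psi (vnorm d (vsub (q j t) (q i t))).
Definition P0M := rmax N (fun i => vnorm d (p i 0)).
Definition normP2 t := config_sq N d (fun i => p i t).
Definition normQ2 t := config_sq N d (fun i => q i t).

Lemma psi_antitone r s : 0 <= r -> r <= s -> psi s <= psi r.
Proof.
  intros Hr Hrs. destruct (Rle_lt_or_eq_dec r s Hrs) as [|<-]; [|lra].
  pose proof (psi_noninc r s Hr ltac:(lra)). nra.
Qed.

Lemma weight_sym i j t : weight i j t = weight j i t.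
Proof. unfold weight. rewrite vnorm_vsub_sym. reflexivity. Qed.

Lemma is_derive_q i k t : (i < N)%nat -> (k < d)%nat -> 0 < t ->
  is_derive (fun s => q i s k) t (Gvel g d (p i t) k).
Proof. intros; apply (solution i k); auto. Qed.

Lemma is_derive_p i k t : (i < N)%nat -> (k < d)%nat -> 0 < t ->
  is_derive (fun s => p i s k) t (force i t k).
Proof. intros; apply (solution i k); auto. Qed.

Lemma q_right_cont i k : (i < N)%nat -> (k < d)%nat ->
  filterlim (fun s => q i s k) (at_right 0) (locally (q i 0 k)).
Proof. intros; apply (solution i k); auto. Qed.

Lemma p_right_cont i k : (i < N)%nat -> (k < d)%nat ->
  filterlim (fun s => p i s k) (at_right 0) (locally (p i 0 k)).
Proof. intros; apply (solution i k); auto. Qed.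

Lemma vdot_force_nonpos_at_max i t :
  (forall j, (j < N)%nat -> vnorm d (p j t) <= vnorm d (p i t)) -> vdot d (p i t) (force i t) <= 0.
Proof.
  intros Hmax.
  destruct (g'_bounded (vnorm d (p i t)) (vnorm_nonneg _ _)) as [m [M [Hm HmM]]].
  unfold force, CS_force. rewrite vdot_scal_r, vdot_rsum_r.
  assert (0 < kappa / INR N) by (apply Rdiv_lt_0_compat; [lra | apply lt_0_INR; lia]).
  rewrite <- (Rmult_0_r (kappa / INR N)). apply Rmult_le_compat_l; [lra|].
  apply rsum_nonpos. intros j Hj. rewrite vdot_scal_r.
  change (vdot d (p i t) (fun k => Gvel g d (p j t) k - Gvel g d (p i t) k))
    with (vdot d (p i t) (vsub (Gvel g d (p j t)) (Gvel g d (p i t)))).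
  rewrite vdot_vsub_r.
  pose proof (vdot_Gvel_le g g' d (vnorm d (p i t)) m M g0 g_derive g_right_cont Hm HmM
                (p i t) (p j t) (Hmax j Hj) ltac:(lra)).
  pose proof (psi_pos (vnorm d (vsub (q j t) (q i t))) (vnorm_nonneg _ _)). nra.
Qed.

Lemma speed_bound t : 0 <= t -> forall i, (i < N)%nat -> vnorm d (p i t) <= P0M.
Proof.
  intros Ht i Hi. apply vnorm_le; [apply rmax_nonneg|].
  eapply Rle_trans.
  - apply (max_principle N (fun i t => vnorm2 d (p i t))
                          (fun i t => 2 * vdot d (p i t) (force i t)));
      auto.
    + intros j s Hj Hs. apply is_derive_vnorm2. intros; apply is_derive_p; auto.
    + intros j s Hj Hs Hmax. enough (vdot d (p j s) (force j s) <= 0) by lra.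
      apply vdot_force_nonpos_at_max. intros l Hl. apply sqrt_le_1_alt, Hmax; auto.
    + intros j Hj. apply filterlim_vnorm2. intros; apply p_right_cont; auto.
  - apply rmax_lub; [apply pow2_ge_0|]. intros j Hj. rewrite <- vnorm_pow2.
    pose proof (vnorm_nonneg d (p j 0)). pose proof (rmax_ge N (fun i => vnorm d (p i 0)) j Hj).
    fold P0M in H0. simpl in H0. nra.
Qed.

Definition dissipation t := rsum N (fun i => rsum N (fun j =>
  weight i j t * vdot d (vsub (p i t) (p j t)) (vsub (Gvel g d (p i t)) (Gvel g d (p j t))))).

Lemma is_derive_normP2 t : 0 < t -> is_derive normP2 t (- 2 * kappa * dissipation t).
Proof.
  intros Ht.
  replace (- 2 * kappa * dissipation t) with
    (2 * rsum N (fun i => rsum N (fun j =>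
           vdot d (vsub (p i t) (p j t)) (vsub (force i t) (force j t))))).
  - apply is_derive_config_sq. intros; apply is_derive_p; auto.
  - replace (- 2 * kappa * dissipation t) with (2 * (- kappa * dissipation t)) by ring.
    f_equal. exact (force_identity N d kappa (fun i => p i t) (fun i => Gvel g d (p i t))
                      (fun i j => weight i j t) N_pos (fun i j _ _ => weight_sym i j t)).
Qed.

Definition dnormQ2 t := 2 * rsum N (fun i => rsum N (fun j =>
  vdot d (vsub (q i t) (q j t)) (vsub (Gvel g d (p i t)) (Gvel g d (p j t))))).

Lemma is_derive_normQ2 t : 0 < t -> is_derive normQ2 t (dnormQ2 t).
Proof. intros Ht. apply is_derive_config_sq. intros; apply is_derive_q; auto. Qed.

Lemma normP2_right_cont : filterlim normP2 (at_right 0) (locally (normP2 0)).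
Proof. apply filterlim_config_sq. intros; apply p_right_cont; auto. Qed.

Lemma normQ2_right_cont : filterlim normQ2 (at_right 0) (locally (normQ2 0)).
Proof. apply filterlim_config_sq. intros; apply q_right_cont; auto. Qed.

Lemma weight_ge_psi_sqrt_normQ2 i j t : (i < N)%nat -> (j < N)%nat ->
  psi (sqrt (normQ2 t)) <= weight i j t.
Proof.
  intros Hi Hj. apply psi_antitone; [apply vnorm_nonneg|].
  apply sqrt_le_1_alt, (vnorm2_le_config_sq N d (fun i => q i t)); auto.
Qed.

Variables (Lpsi Bp : R).
Hypothesis psi_bound : forall r, 0 <= r -> psi r <= Bp.
Hypothesis psi_lip : forall r s, 0 <= r -> 0 <= s -> Rabs (psi r - psi s) <= Lpsi * Rabs (r - s).

Section SpeedBounds.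
Variables (m M : R).
Hypothesis m_pos : 0 < m.
Hypothesis g'_bounds : forall r, 0 <= r <= P0M -> m <= g' r <= M.

Lemma M_pos : 0 < M.
Proof.
  pose proof (rmax_nonneg N (fun i => vnorm d (p i 0))). pose proof (g'_bounds 0).
  fold P0M in H. lra.
Qed.

Lemma dissipation_ge t w0 : 0 < t ->
  (forall i j, (i < N)%nat -> (j < N)%nat -> w0 <= weight i j t) ->
  0 <= w0 -> m * w0 * normP2 t <= dissipation t.
Proof.
  intros Ht Hw Hw0. unfold normP2, config_sq, dissipation.
  rewrite <- rsum_scal. apply rsum_le; intros i Hi.
  rewrite <- rsum_scal. apply rsum_le; intros j Hj.
  pose proof (Gvel_monotone g g' d P0M m M g0 g_derive g_right_cont m_pos g'_bounds (p i t) (p j t)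
                (speed_bound t ltac:(lra) i Hi) (speed_bound t ltac:(lra) j Hj)).
  pose proof (vnorm2_nonneg d (vsub (p i t) (p j t))). pose proof (Hw i j Hi Hj).
  assert (0 <= m * vnorm2 d (vsub (p i t) (p j t))) by nra. nra.
Qed.

Lemma exp_decay_of_spatially_bounded : spatially_bounded N d q -> exp_decay N d p.
Proof.
  intros [BQ HBQ].
  assert (HBQ0 : 0 <= BQ) by (eapply Rle_trans; [apply rmax_nonneg | apply (HBQ 0); lra]).
  set (C := kappa * m * psi BQ).
  assert (HC : 0 < C)
    by (pose proof (psi_pos BQ HBQ0); unfold C; repeat apply Rmult_lt_0_compat; auto).
  assert (Hdecay : forall t, 0 <= t -> normP2 t <= normP2 0 * exp (- (2 * C) * t)).
  { intros t Ht. apply (le_exp_of_derive_le normP2 (fun s => - 2 * kappa * dissipation s)); auto.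
    - intros s Hs. apply is_derive_normP2; lra.
    - intros s Hs. enough (m * psi BQ * normP2 s <= dissipation s) by (unfold C; nra).
      apply dissipation_ge; [lra | | left; apply psi_pos; lra].
      intros i j Hi Hj. apply psi_antitone; [apply vnorm_nonneg|].
      eapply Rle_trans; [apply vnorm_le_DQ; eauto | apply HBQ; lra].
    - apply normP2_right_cont. }
  exists (sqrt (normP2 0) + 1), C. pose proof (sqrt_pos (normP2 0)).
  repeat split; [lra | exact HC|]. intros t Ht.
  pose proof (exp_pos (- C * t)).
  assert (E : normP2 0 * exp (- (2 * C) * t) = (sqrt (normP2 0) * exp (- C * t)) ^ 2).
  { rewrite Rpow_mult_distr, pow2_sqrt by apply config_sq_nonneg.
    replace (- (2 * C) * t) with (- C * t + - C * t) by ring. rewrite exp_plus. ring. }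
  eapply Rle_trans; [apply DQ_le_sqrt_config_sq|]. fold (normP2 t).
  eapply Rle_trans; [apply (sqrt_le_1_alt _ ((sqrt (normP2 0) * exp (- C * t)) ^ 2))|].
  { rewrite <- E. apply Hdecay; auto. }
  rewrite sqrt_pow2 by (apply Rmult_le_pos; lra). nra.
Qed.

Lemma Gvel_coord_sub_le_DQ i j k s : (i < N)%nat -> (j < N)%nat -> (k < d)%nat -> 0 <= s ->
  Rabs (Gvel g d (p i s) k - Gvel g d (p j s) k) <= M * DQ N d p s.
Proof.
  intros Hi Hj Hk Hs.
  eapply Rle_trans;
    [apply (Rabs_coord_le_vnorm d (vsub (Gvel g d (p i s)) (Gvel g d (p j s))) k Hk)|].
  eapply Rle_trans; [apply (Gvel_lipschitz g g' d P0M m M); auto using speed_bound|].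
  apply Rmult_le_compat_l; [pose proof M_pos; lra | apply vnorm_le_DQ; auto].
Qed.

(* Each relative position moves by at most [M B / C] in total. *)
Lemma spatially_bounded_of_exp_decay : exp_decay N d p -> spatially_bounded N d q.
Proof.
  intros [B [C [HB [HC Hdec]]]]. set (K := M * B / C).
  assert (Hcoord : forall i j k t, (i < N)%nat -> (j < N)%nat -> (k < d)%nat -> 0 <= t ->
            Rabs (q i t k - q j t k) <= Rabs (q i 0 k - q j 0 k) + K).
  { intros i j k t Hi Hj Hk Ht.
    enough (Rabs ((q i t k - q j t k) - (q i 0 k - q j 0 k)) <= K).
    { pose proof (Rabs_triang_inv (q i t k - q j t k) (q i 0 k - q j 0 k)). lra. }
    apply (abs_sub_le_of_derive_exp_bound (fun s => q i s k - q j s k)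
             (fun s => Gvel g d (p i s) k - Gvel g d (p j s) k)); auto.
    - intros s Hs. apply (is_derive_minus (V:=R_NormedModule)); apply is_derive_q; auto.
    - intros s Hs. eapply Rle_trans; [apply Gvel_coord_sub_le_DQ; auto; lra|].
      rewrite Rmult_assoc. apply Rmult_le_compat_l; [pose proof M_pos; lra | apply Hdec; lra].
    - apply filterlimR_minus; apply q_right_cont; auto. }
  exists (rmax N (fun i => rmax N (fun j =>
            sqrt (rsum d (fun k => (Rabs (q i 0 k - q j 0 k) + K) ^ 2))))).
  intros t Ht. apply rmax_le_compat; intros i Hi. apply rmax_le_compat; intros j Hj.
  apply sqrt_le_1_alt, rsum_le. intros k Hk. unfold vsub.
  rewrite <- (pow2_abs (q i t k - q j t k)).
  pose proof (Hcoord i j k t Hi Hj Hk Ht). pose proof (Rabs_pos (q i t k - q j t k)). nra.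
Qed.

Lemma dnormQ2_le t : 0 < t -> dnormQ2 t <= 2 * M * sqrt (normQ2 t) * sqrt (normP2 t).
Proof.
  intros Ht. pose proof M_pos. unfold dnormQ2.
  enough (rsum N (fun i => rsum N (fun j =>
            vdot d (vsub (q i t) (q j t)) (vsub (Gvel g d (p i t)) (Gvel g d (p j t)))))
          <= M * (sqrt (normQ2 t) * sqrt (normP2 t))) by lra.
  eapply Rle_trans.
  - apply (rsum_le N _ (fun i => M * rsum N (fun j =>
             vnorm d (vsub (q i t) (q j t)) * vnorm d (vsub (p i t) (p j t))))).
    intros i Hi. rewrite <- rsum_scal. apply rsum_le. intros j Hj.
    eapply Rle_trans; [apply vdot_le_vnorm|].
    pose proof (vnorm_nonneg d (vsub (q i t) (q j t))).
    pose proof (Gvel_lipschitz g g' d P0M m M g0 g_derive g_right_cont m_pos g'_bounds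
                  (p i t) (p j t)
                  (speed_bound t ltac:(lra) i Hi) (speed_bound t ltac:(lra) j Hj)).
    nra.
  - rewrite rsum_scal. apply Rmult_le_compat_l; [lra|].
    apply rsum2_vnorm_mul_le.
Qed.

(* The functional [sqrt ||P||^2 + kappa m / M * Psi (sqrt ||Q||^2)] does not increase;
   [e] regularizes the square roots at 0, at the cost of a drift linear in time. *)
Definition lyapunov e s := sqrt (normP2 s + e) + kappa * m / M * Psi psi (sqrt (normQ2 s + e))
                           - kappa * m * Bp * sqrt e * s.

Lemma lyapunov_nonincreasing e t : 0 < e -> 0 <= t -> lyapunov e t <= lyapunov e 0.
Proof.
  intros He Ht. pose proof M_pos.
  apply (nonincreasing_of_derive_nonpos 0 t (lyapunov e)
           (fun s => - 2 * kappa * dissipation s / (2 * sqrt (normP2 s + e))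
                     + kappa * m / M * (dnormQ2 s / (2 * sqrt (normQ2 s + e))
                                        * psi_ext psi (sqrt (normQ2 s + e)))
                     - kappa * m * Bp * sqrt e)); try lra.
  - intros s Hs. pose proof (config_sq_nonneg N d (fun i => p i s)).
    pose proof (config_sq_nonneg N d (fun i => q i s)).
    apply (is_derive_minus (V:=R_NormedModule)); [|auto_derive; [auto | ring]].
    apply (is_derive_plus (V:=R_NormedModule)).
    + apply (is_derive_sqrt_comp (fun s => normP2 s + e)); [|unfold normP2; lra].
      apply is_derive_plus_const, is_derive_normP2; lra.
    + apply is_derive_scal, (is_derive_Psi_comp psi Lpsi psi_lip (fun s => sqrt (normQ2 s + e))).
      apply (is_derive_sqrt_comp (fun s => normQ2 s + e)); [|unfold normQ2; lra].
      apply is_derive_plus_const, is_derive_normQ2; lra.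
  - intros s Hs.
    pose proof (sqrt_pos (normQ2 s)). pose proof (sqrt_pos (normQ2 s + e)).
    pose proof (psi_pos (sqrt (normQ2 s)) ltac:(lra)).
    apply (lyapunov_rate_nonpos kappa m M Bp (normP2 s) (normQ2 s) _ _ e (psi (sqrt (normQ2 s))));
      try apply config_sq_nonneg; auto.
    + rewrite psi_ext_eq by lra. split; [left; apply psi_pos; lra|].
      apply psi_antitone; [lra | apply sqrt_le_1_alt; lra].
    + enough (m * psi (sqrt (normQ2 s)) * normP2 s <= dissipation s) by nra.
      apply dissipation_ge; [lra | | lra]. intros; apply weight_ge_psi_sqrt_normQ2; auto.
    + apply dnormQ2_le; lra.
  - unfold lyapunov. apply filterlimR_minus; [apply filterlimR_plus|].
    + apply filterlimR_continuous; [|apply continuous_sqrt].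
      apply filterlimR_plus; [apply normP2_right_cont | apply filterlimR_const].
    + apply filterlimR_mult; [apply filterlimR_const|].
      apply filterlimR_continuous; [|apply (Psi_continuous psi Lpsi psi_lip)].
      apply filterlimR_continuous; [|apply continuous_sqrt].
      apply filterlimR_plus; [apply normQ2_right_cont | apply filterlimR_const].
    + apply filterlimR_mult; [apply filterlimR_const | apply filterlim_at_right_id].
Qed.

Lemma Psi_sqrt_normQ2_bound t : 0 <= t ->
  kappa * m / M * (Psi psi (sqrt (normQ2 t)) - Psi psi (sqrt (normQ2 0))) <= sqrt (normP2 0).
Proof.
  intros Ht. pose proof M_pos.
  set (cL := kappa * m / M). assert (HcL : 0 < cL) by (apply Rdiv_lt_0_compat; nra).
  assert (HBp : 0 < Bp)
    by (pose proof (psi_pos 0 ltac:(lra)); pose proof (psi_bound 0 ltac:(lra)); lra).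
  set (Z := 1 + cL * Bp + kappa * m * Bp * t).
  assert (HZ : 0 < Z) by (assert (0 <= kappa * m * Bp * t) by (repeat apply Rmult_le_pos; lra);
                          unfold Z; nra).
  (* Let [e] tend to 0 in [lyapunov_nonincreasing]: take [sqrt e = eps / Z]. *)
  apply Rle_plus_epsilon. intros eps Heps.
  set (e := (eps / Z) ^ 2). assert (He : 0 < e) by (apply pow_lt, Rdiv_lt_0_compat; lra).
  assert (Hse : sqrt e * Z = eps)
    by (unfold e; rewrite sqrt_pow2; [field | apply Rdiv_le_0_compat]; lra).
  pose proof (lyapunov_nonincreasing e t He Ht) as L. unfold lyapunov in L.
  rewrite Rmult_0_r, Rminus_0_r in L.
  pose proof (config_sq_nonneg N d (fun i => p i 0)).
  pose proof (config_sq_nonneg N d (fun i => q i 0)).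
  pose proof (config_sq_nonneg N d (fun i => q i t)). fold (normP2 0) (normQ2 0) (normQ2 t) in *.
  pose proof (sqrt_pos (normP2 t + e)). pose proof (sqrt_pos e).
  assert (Psi psi (sqrt (normQ2 t)) <= Psi psi (sqrt (normQ2 t + e)))
    by (apply (Psi_le psi Lpsi Bp); auto; apply sqrt_le_1_alt; lra).
  assert (Psi psi (sqrt (normQ2 0 + e)) - Psi psi (sqrt (normQ2 0)) <= Bp * sqrt e).
  { pose proof (sqrt_add_le (normQ2 0) e ltac:(lra) ltac:(lra)).
    pose proof (Psi_sub_bounds psi Lpsi Bp psi_pos psi_bound psi_lip
                  (sqrt (normQ2 0)) (sqrt (normQ2 0 + e))
                  ltac:(apply sqrt_le_1_alt; lra)). nra. }
  pose proof (sqrt_add_le (normP2 0) e ltac:(lra) ltac:(lra)).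
  fold cL in L. unfold Z in Hse. nra.
Qed.

Lemma spatially_bounded_of_lyapunov X : 0 <= X ->
  sqrt (normP2 0) < kappa * m / M * (Psi psi X - Psi psi (sqrt (normQ2 0))) ->
  spatially_bounded N d q.
Proof.
  intros HX HXc. exists X. intros t Ht. pose proof M_pos.
  eapply Rle_trans; [apply DQ_le_sqrt_config_sq|]. fold (normQ2 t).
  destruct (Rle_dec (sqrt (normQ2 t)) X) as [|Hn]; auto. exfalso.
  pose proof (Psi_le psi Lpsi Bp psi_pos psi_bound psi_lip X (sqrt (normQ2 t)) ltac:(lra)).
  pose proof (Psi_sqrt_normQ2_bound t Ht).
  assert (0 < kappa * m / M) by (apply Rdiv_lt_0_compat; nra). nra.
Qed.

End SpeedBounds.

Lemma g'_bounds_on_speeds : exists m M, 0 < m /\ forall r, 0 <= r <= P0M -> m <= g' r <= M.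
Proof. apply g'_bounded, rmax_nonneg. Qed.

Lemma exp_decay_iff_spatially_bounded : exp_decay N d p <-> spatially_bounded N d q.
Proof.
  destruct g'_bounds_on_speeds as [m [M [Hm Hb]]]. split.
  - apply (spatially_bounded_of_exp_decay m M); auto.
  - apply (exp_decay_of_spatially_bounded m M); auto.
Qed.

Lemma flocking_iff_exp_decay : flocking N d q p <-> exp_decay N d p.
Proof.
  split; [intros [Hb _]; apply exp_decay_iff_spatially_bounded; exact Hb|].
  intros Hdec. split; [apply exp_decay_iff_spatially_bounded; exact Hdec|].
  destruct Hdec as [B [C [HB [HC Hdec]]]].
  apply (is_lim_le_le_loc (fun _ => 0) (fun t => B * exp (- C * t))).
  - exists 0. intros t Ht. split; [apply rmax_nonneg | apply Hdec; lra].
  - apply is_lim_const.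
  - apply is_lim_exp_decay; auto.
Qed.

(* The constant [MM kappa / MG] of the smallness condition, in the paper's notation
   [MG = sup g'], [mG = inf g'] over [[0, P0M]] and [MM = min(mG, mG^2 / MG)]. *)
Definition flocking_constant :=
  Rmin (inf_on g' P0M) (inf_on g' P0M ^ 2 / sup_on g' P0M) * kappa / sup_on g' P0M.

Lemma flocking_constant_bounds :
  0 < flocking_constant <= kappa * inf_on g' P0M / sup_on g' P0M.
Proof.
  destruct (inf_on_sup_on_bounds g' P0M (rmax_nonneg _ _) g'_bounds_on_speeds) as [HmG Hb].
  assert (HMG : 0 < sup_on g' P0M)
    by (pose proof (rmax_nonneg N (fun i => vnorm d (p i 0))); pose proof (Hb 0);
        fold P0M in *; lra).
  unfold flocking_constant.
  set (mG := inf_on g' P0M) in *. set (MG := sup_on g' P0M) in *.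
  assert (0 < Rmin mG (mG ^ 2 / MG)) by (apply Rmin_glb_lt; [|apply Rdiv_lt_0_compat]; nra).
  pose proof (Rmin_l mG (mG ^ 2 / MG)).
  split; [apply Rdiv_lt_0_compat; nra|].
  unfold Rdiv. apply Rmult_le_compat_r; [left; apply Rinv_0_lt_compat|]; nra.
Qed.

Lemma flocking_of_small_initial_data :
  Rbar_lt (config_norm N d (fun i => p i 0))
    (Rbar_mult flocking_constant (improper_int psi (config_norm N d (fun i => q i 0)))) ->
  flocking N d q p.
Proof.
  intros H. rewrite !config_norm_sqrt in H. fold (normP2 0) (normQ2 0) in H.
  destruct flocking_constant_bounds as [Hc Hcle].
  destruct (inf_on_sup_on_bounds g' P0M (rmax_nonneg _ _) g'_bounds_on_speeds) as [HmG Hb].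
  destruct (exists_lt_of_is_lim_seq _ _ _ _
              (improper_int_as_limit psi Lpsi Bp psi_pos psi_bound psi_lip _ (sqrt_pos _)) Hc H)
    as [n Hn].
  apply flocking_iff_exp_decay, exp_decay_iff_spatially_bounded.
  apply (spatially_bounded_of_lyapunov _ _ HmG Hb (INR n) (pos_INR n)).
  set (gap := Psi psi (INR n) - Psi psi (sqrt (normQ2 0))) in *.
  pose proof (sqrt_pos (normP2 0)).
  assert (0 < gap) by (apply (Rmult_lt_reg_l flocking_constant); lra).
  apply Rlt_le_trans with (flocking_constant * gap); [exact Hn | apply Rmult_le_compat_r; lra].
Qed.

Lemma flocking_of_nonintegrable_kernel : improper_int psi 0 = p_infty -> flocking N d q p.
Proof.
  intros H. apply flocking_of_small_initial_data.
  rewrite (improper_int_p_infty psi Lpsi Bp psi_pos psi_bound psi_lip) by (auto; apply sqrt_pos).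
  destruct flocking_constant_bounds as [Hc _].
  simpl. destruct (Rle_dec 0 flocking_constant) as [H0|]; [|lra].
  destruct (Rle_lt_or_eq_dec 0 flocking_constant H0); [exact I | lra].
Qed.

End CuckerSmale.

Theorem theorem2p1 (N d : nat) (kappa : R) (g g' psi : R -> R)
    (q p : nat -> R -> vec) :
  (1 <= N)%nat -> (1 <= d)%nat -> 0 < kappa ->
  velocity_control g g' -> comm_kernel psi ->
  CS_solution N d kappa g psi q p ->
  ((flocking N d q p <-> exp_decay N d p) /\
   (exp_decay N d p <-> spatially_bounded N d q)) /\
  (let P0M := rmax N (fun i => vnorm d (p i 0)) in
   let MG := sup_on g' P0M in
   let mG := inf_on g' P0M in
   let MM := Rmin mG (mG ^ 2 / MG) in
   Rbar_lt (config_norm N d (fun i => p i 0))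
           (Rbar_mult (MM * kappa / MG) (improper_int psi (config_norm N d (fun i => q i 0)))) ->
   flocking N d q p) /\
  (improper_int psi 0 = p_infty -> flocking N d q p).
Proof.
  intros HN _ Hkappa [Hg0 [Hg' [_ [Hg0r [_ [Hg'b _]]]]]] [Hpsi [[Bp HBp] [[L HL] Hmono]]] Hsol.
  split; [split|split].
  - eapply flocking_iff_exp_decay; eauto.
  - eapply exp_decay_iff_spatially_bounded; eauto.
  - intros P0M MG mG MM. eapply flocking_of_small_initial_data; eauto.
  - eapply flocking_of_nonintegrable_kernel; eauto.
Qed.
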